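(* Let $X,Y$ be finite sets with $\max\{|X|,|Y|\}\le N<\infty$, $c\in\mathbb R_+^{X\times Y}$, and let $\mu\in\mathcal P(X)$, $\nu\in\mathcal P(Y)$ satisfy $\mu=r/M$, $\nu=s/M$ for a positive integer $M$ and vectors $r\in\mathbb Z_{++}^X$, $s\in\mathbb Z_{++}^Y$ of strictly positive integers. Let $\varepsilon_1>\varepsilon_2>0$ and let $(\alpha_a,\beta_a)$ be a maximizer of $J_{\varepsilon_a}$ for $a=1,2$. Set $\Delta\alpha=\alpha_2-\alpha_1$, $\Delta\beta=\beta_2-\beta_1$. Then $$\max\Delta\alpha-\min\Delta\alpha\le\varepsilon_1 N(4\log N+24\log M),\qquad\max\Delta\beta-\min\Delta\beta\le\varepsilon_1N(4\log N+24\log M).$$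
   Context: For $\varepsilon>0$, $K_\varepsilon(x,y)=\exp(-c(x,y)/\varepsilon)\mu(x)\nu(y)$ and the dual entropic optimal transport functional is $J_\varepsilon(\alpha,\beta)=\langle\alpha,\mu\rangle+\langle\beta,\nu\rangle-\varepsilon\sum_{x,y}K_\varepsilon(x,y)\big(\exp((\alpha(x)+\beta(y))/\varepsilon)-1\big)$ for $\alpha\in\mathbb R^X,\beta\in\mathbb R^Y$. $\max\Delta\alpha$ denotes the largest entry of the vector $\Delta\alpha$ (similarly $\min$). *)

From HB Require Import structures.
From mathcomp Require Import all_boot all_order all_algebra.
From mathcomp Require Import all_classical all_reals all_analysis.
Set Implicit Arguments. Unset Strict Implicit. Unset Printing Implicit Defensive.
Import Order.TTheory GRing.Theory Num.Theory.
Local Open Scope ring_scope.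

Definition Keps (R : realType) (X Y : finType) (c : X -> Y -> R)
  (mu : X -> R) (nu : Y -> R) (eps : R) (x : X) (y : Y) : R :=
  expR (- c x y / eps) * mu x * nu y.

Definition Jeps (R : realType) (X Y : finType) (c : X -> Y -> R)
  (mu : X -> R) (nu : Y -> R) (eps : R) (alpha : X -> R) (beta : Y -> R) : R :=
  \sum_(x : X) alpha x * mu x + \sum_(y : Y) beta y * nu y
  - eps * \sum_(x : X) \sum_(y : Y)
      Keps c mu nu eps x y * (expR ((alpha x + beta y) / eps) - 1).

Definition is_maximizer (R : realType) (X Y : finType) (c : X -> Y -> R)
  (mu : X -> R) (nu : Y -> R) (eps : R) (alpha : X -> R) (beta : Y -> R) : Prop :=
  forall (a : X -> R) (b : Y -> R), Jeps c mu nu eps a b <= Jeps c mu nu eps alpha beta.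

From HB Require Import structures.
From mathcomp Require Import all_boot all_order all_algebra.
From mathcomp Require Import all_classical all_reals all_analysis.
From mathcomp Require Import ring lra.
Import Order.TTheory GRing.Theory Num.Theory.
Local Open Scope ring_scope.

(* The optimal plans P_a = K_(eps_a) exp((alpha_a + beta_a) / eps_a) are couplings of mu and nu
   (first-order conditions of J_(eps_a)), and with u = alpha2 - alpha1, v = beta1 - beta2,
     u x - v y = eps2 ln (P2 x y / (mu x nu y)) - eps1 ln (P1 x y / (mu x nu y)).
   Suppose the values of u and v together leave a gap (t, t + G) with values on both sides, and
   let A, B be the points above it. For both plans mu(A) - nu(B) = P(A x ~B) - P(~A x B), a
   multiple of 1/M: either one off-diagonal block has mass >= 1/M, or the two have equal
   positive masses. An entry carrying a 1/(|X||Y|) share of such a block pins u x - v y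
   to within eps1 (ln (|X||Y|) + 3 ln M) of 0, contradicting the gap for larger G. Hence the
   |X| + |Y| <= 2N values of u and v spread over at most 2N G. *)

Lemma expR_gain_le0_eq (R : realType) (m S e : R) : 0 < m -> 0 <= S -> 0 < e ->
  (forall t, t * m - e * ((expR (t / e) - 1) * S) <= 0) -> S = m.
Proof.
move=> m0 S0 e0 gain_le0; have [S_eq0|S_neq0] := eqVneq S 0.
  by have := gain_le0 1; rewrite S_eq0 !mulr0 subr0 mul1r => /(lt_le_trans m0); rewrite ltxx.
have {S0}S_gt0 : 0 < S by rewrite lt_def S_neq0.
(* At t = e ln (m / S) the gain is e m (z - 1 + exp (- z)) with z = ln (m / S). *)
set z := ln (m / S).
have expNz : expR (- z) = S / m by rewrite expRN lnK ?posrE ?divr_gt0 // invf_div.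
have := gain_le0 (e * z); rewrite [e * z]mulrC mulfK ?gt_eqF // lnK ?posrE ?divr_gt0 //.
rewrite mulrBl mulfVK ?gt_eqF // mul1r.
have [z0|zn0] := eqVneq z 0.
  move=> _; move: expNz; rewrite z0 oppr0 expR0 => /(congr1 ( *%R^~ m)) /=.
  by rewrite mul1r divfK ?gt_eqF // => ->.
have : 1 - z < S / m by rewrite -expNz; apply: expR_gt1Dx; rewrite oppr_eq0.
rewrite ltr_pdivlMr // mulrBl mul1r => hlt hle.
have : 0 < e * (z * m - m + S) by rewrite mulr_gt0 //; lra.
have : e * (z * m - m + S) = z * e * m - e * (m - S) by ring.
lra.
Qed.

Section DualFunctional.
Context {R : realType} {X Y : finType} {c : X -> Y -> R} {mu : X -> R} {nu : Y -> R} {eps : R}.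

Definition plan (alpha : X -> R) (beta : Y -> R) (x : X) (y : Y) : R :=
  Keps c mu nu eps x y * expR ((alpha x + beta y) / eps).

Lemma Jeps_shift (alpha : X -> R) (beta : Y -> R) (x : X) (t : R) :
  Jeps c mu nu eps (fun z => alpha z + t * (z == x)%:R) beta =
  Jeps c mu nu eps alpha beta
    + (t * mu x - eps * ((expR (t / eps) - 1) * \sum_y plan alpha beta x y)).
Proof.
have row_shift : \sum_y Keps c mu nu eps x y * (expR ((alpha x + t + beta y) / eps) - 1)
    = \sum_y Keps c mu nu eps x y * (expR ((alpha x + beta y) / eps) - 1)
      + (expR (t / eps) - 1) * \sum_y plan alpha beta x y.
  rewrite mulr_sumr -big_split /=; apply: eq_bigr => y _.
  rewrite /plan addrAC mulrDl expRD; ring.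
rewrite /Jeps [in LHS](bigD1 x) //= [in RHS](bigD1 x) //=.
rewrite [in S in _ - eps * S = _](bigD1 x) //= [in S in _ = _ - eps * S + _](bigD1 x) //=.
rewrite eqxx mulr1 row_shift.
under eq_bigr => z /negbTE-> do rewrite mulr0 addr0.
under [S in _ - eps * (_ + S)]eq_bigr => z /negbTE-> do rewrite mulr0 addr0.
ring.
Qed.

Hypotheses (eps_gt0 : 0 < eps) (mu_gt0 : forall x, 0 < mu x) (nu_gt0 : forall y, 0 < nu y).

Lemma plan_gt0 (alpha : X -> R) (beta : Y -> R) x y : 0 < plan alpha beta x y.
Proof. by rewrite /plan /Keps !mulr_gt0 ?expR_gt0. Qed.

Lemma maximizer_row_marginal {alpha : X -> R} {beta : Y -> R} :
  is_maximizer c mu nu eps alpha beta -> forall x, \sum_y plan alpha beta x y = mu x.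
Proof.
move=> hmax x; apply: expR_gain_le0_eq (mu_gt0 x) _ eps_gt0 _.
  by apply: sumr_ge0 => y _; apply/ltW/plan_gt0.
by move=> t; have := hmax (fun z => alpha z + t * (z == x)%:R) beta; rewrite Jeps_shift gerDl.
Qed.

End DualFunctional.

Arguments plan {R X Y} c mu nu eps alpha beta x y.

Section Transpose.
Context {R : realType} {X Y : finType} {c : X -> Y -> R} {mu : X -> R} {nu : Y -> R} {eps : R}.

Local Notation ct := (fun y x => c x y).

Lemma plan_tr (alpha : X -> R) (beta : Y -> R) x y :
  plan ct nu mu eps beta alpha y x = plan c mu nu eps alpha beta x y.
Proof. by rewrite /plan /Keps [_ * nu y * mu x]mulrAC [beta y + _]addrC. Qed.

Lemma Jeps_tr (alpha : X -> R) (beta : Y -> R) :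
  Jeps ct nu mu eps beta alpha = Jeps c mu nu eps alpha beta.
Proof.
rewrite /Jeps exchange_big; congr (_ - eps * _); first exact: addrC.
apply: eq_bigr => x _; apply: eq_bigr => y _.
by rewrite /Keps [_ * nu y * mu x]mulrAC [beta y + _]addrC.
Qed.

Hypotheses (eps_gt0 : 0 < eps) (mu_gt0 : forall x, 0 < mu x) (nu_gt0 : forall y, 0 < nu y).

Lemma maximizer_col_marginal {alpha : X -> R} {beta : Y -> R} :
  is_maximizer c mu nu eps alpha beta -> forall y, \sum_x plan c mu nu eps alpha beta x y = nu y.
Proof.
move=> hmax y.
have hmax_tr : is_maximizer ct nu mu eps beta alpha.
  by move=> b a; rewrite !Jeps_tr; apply: hmax.
rewrite -(maximizer_row_marginal eps_gt0 nu_gt0 mu_gt0 hmax_tr y).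
by apply: eq_bigr => x _; rewrite plan_tr.
Qed.

End Transpose.

Lemma ln_plan_density (R : realType) (X Y : finType) (c : X -> Y -> R) (mu : X -> R)
    (nu : Y -> R) (eps : R) (alpha : X -> R) (beta : Y -> R) x y :
  eps != 0 -> 0 < mu x -> 0 < nu y ->
  eps * ln (plan c mu nu eps alpha beta x y / (mu x * nu y)) = alpha x + beta y - c x y.
Proof.
move=> eps_neq0 mux_gt0 nuy_gt0.
have -> : plan c mu nu eps alpha beta x y / (mu x * nu y)
    = expR (- c x y / eps) * expR ((alpha x + beta y) / eps).
  by rewrite /plan /Keps; field; rewrite !gt_eqF.
by rewrite -expRD expRK; field.
Qed.

Lemma exists_ge_mean (R : realFieldType) (I : finType) (D : pred I) (F : I -> R) :
  0 < \sum_(i | D i) F i -> exists2 i, D i & (\sum_(i | D i) F i) / #|I|%:R <= F i.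
Proof.
set m := \sum_(i | D i) F i => m_gt0.
have [/exists_inP[i Di hi]|/exists_inPn below] := boolP [exists (i | D i), m / #|I|%:R <= F i].
  by exists i.
have D_nonempty : has D (index_enum I).
  by apply: contraTT m_gt0 => no_D; rewrite /m big_hasC // ltxx.
have card_gt0 : (0 < #|I|)%N.
  by case/hasP: D_nonempty => i _ _; apply/card_gt0P; exists i.
have lt_m : m < \sum_(i | D i) m / #|I|%:R.
  by apply: ltr_sum => // i /below; rewrite -ltNge.
have le_m : \sum_(i | D i) m / #|I|%:R <= m.
  rewrite sumr_const -[_ *+ _]mulr_natr; apply: (@le_trans _ _ (m / #|I|%:R * #|I|%:R)).
    by apply: ler_wpM2l; [rewrite divr_ge0 // ltW | rewrite ler_nat max_card].
  by rewrite divfK // pnatr_eq0 -lt0n.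
by have := lt_le_trans lt_m le_m; rewrite ltxx.
Qed.

Section Blocks.
Context {R : realFieldType} {X Y : finType}.
Variable P : X -> Y -> R.

Definition block (A : {set X}) (B : {set Y}) : R := \sum_(x in A) \sum_(y in B) P x y.

Lemma block_marginal_diff {mu : X -> R} {nu : Y -> R} (A : {set X}) (B : {set Y}) :
  (forall x, \sum_y P x y = mu x) -> (forall y, \sum_x P x y = nu y) ->
  \sum_(x in A) mu x - \sum_(y in B) nu y = block A (~: B) - block (~: A) B.
Proof.
move=> row col.
have rowA : \sum_(x in A) mu x = block A B + block A (~: B).
  rewrite -big_split; apply: eq_bigr => x _.
  rewrite -row [in LHS](bigID (fun y => y \in B)); congr (_ + _).
  by apply: eq_bigl => y; rewrite inE.
have colB : \sum_(y in B) nu y = block A B + block (~: A) B.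
  rewrite /block [X in X + _]exchange_big [X in _ + X]exchange_big -big_split.
  apply: eq_bigr => y _.
  rewrite -col [in LHS](bigID (fun x => x \in A)); congr (_ + _).
  by apply: eq_bigl => x; rewrite inE.
by rewrite rowA colB opprD addrACA subrr add0r.
Qed.

Hypothesis P_ge0 : forall x y, 0 <= P x y.

Lemma block_ge_entry (A : {set X}) (B : {set Y}) x y :
  x \in A -> y \in B -> P x y <= block A B.
Proof.
move=> xA yB; rewrite /block (bigD1 x) //= (bigD1 y) //= -addrA lerDl.
by apply: addr_ge0; apply: sumr_ge0 => // x' _; apply: sumr_ge0.
Qed.

Lemma block_le_total (A : {set X}) (B : {set Y}) : block A B <= \sum_x \sum_y P x y.
Proof.
rewrite /block [leRHS](bigID (fun x => x \in A)) /=.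
apply: ler_wpDr; first by apply: sumr_ge0 => x _; apply: sumr_ge0.
apply: ler_sum => x _; rewrite [leRHS](bigID (fun y => y \in B)) /=.
by apply: ler_wpDr => //; apply: sumr_ge0.
Qed.

Lemma block_entry_ge_mean (A : {set X}) (B : {set Y}) : 0 < block A B ->
  exists x y, [/\ x \in A, y \in B & block A B / (#|X| * #|Y|)%:R <= P x y].
Proof.
rewrite /block pair_big /= -card_prod => /exists_ge_mean[[x y] /= /andP[xA yB] hxy].
by exists x, y.
Qed.

End Blocks.

Lemma block_gt0 {R : realFieldType} {X Y : finType} {P : X -> Y -> R} {A : {set X}}
    {B : {set Y}} x y :
  (forall x y, 0 < P x y) -> x \in A -> y \in B -> 0 < block P A B.
Proof.
move=> P_gt0 xA yB; apply: lt_le_trans (P_gt0 x y) _.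
exact: block_ge_entry (fun x y => ltW (P_gt0 x y)) A B x y xA yB.
Qed.

Definition sumf {X Y T : Type} (u : X -> T) (v : Y -> T) (z : X + Y) : T :=
  match z with inl x => u x | inr y => v y end.

Lemma sumf_neq_split {X Y : Type} {T : eqType} (u : X -> T) (v : Y -> T) (x0 : X) (y0 : Y)
    (z0 z1 : X + Y) :
  sumf u v z0 != sumf u v z1 -> exists x y, u x != v y.
Proof.
case: z0 z1 => [x|y] [x'|y'] /= neq; try by [exists x, y' | exists x', y; rewrite eq_sym].
  have [eq_x|] := eqVneq (u x) (v y0); last by exists x, y0.
  by exists x', y0; rewrite -eq_x eq_sym.
have [eq_y|] := eqVneq (u x0) (v y); last by exists x0, y.
by exists x0, y'; rewrite eq_y.
Qed.

Lemma gapless_spread_le (R : realDomainType) (Z : finType) (f : Z -> R) (G : R) : 0 <= G ->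
  (forall t, (exists z, f z <= t) -> (exists z, t + G <= f z) -> exists z, t < f z < t + G) ->
  forall z0 z1, f z1 - f z0 <= #|Z|%:R * G.
Proof.
move=> G_ge0 gapless z0 z1.
(* A gapless climb of k steps of length < G from f z meets k + 1 values below f z1. *)
have climb k z : f z + k%:R * G < f z1 -> (k < #|[pred w | (f z <= f w < f z1)%R]|)%N.
  elim: k z => [|k IHk] z hz.
    by apply/card_gt0P; exists z; rewrite inE lexx; move: hz; rewrite mul0r addr0.
  have kG_ge0 : 0 <= k%:R * G by rewrite mulr_ge0.
  have hz' : f z + k%:R * G + G < f z1 by move: hz; rewrite -addn1 natrD mulrDl mul1r addrA.
  have [w /andP[zw wz]] : exists w, f z < f w < f z + G.
    by apply: gapless; [exists z | exists z1; lra].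
  apply: leq_ltn_trans (IHk w _) _; first by lra.
  apply: fintype.proper_card; apply/fintype.properP; split.
    by apply/fintype.subsetP => w'; rewrite !inE => /andP[ww' ->]; rewrite (le_trans (ltW zw)).
  by exists z; rewrite !inE ?lexx -?ltNge /=; lra.
rewrite leNgt; apply/negP => spread_gt.
by have := climb #|Z| z0 ltac:(lra); rewrite ltnNge max_card.
Qed.

Lemma card_gt0_of_sum_gt0 (I : finType) (k : I -> nat) :
  (0 < \sum_i k i)%N -> (0 < #|I|)%N.
Proof.
move=> sum_gt0; case: (pickP (xpredT : pred I)) => [i _|none]; first by apply/card_gt0P; exists i.
by move: sum_gt0; rewrite big_pred0.
Qed.

Lemma ratio_bounds (R : realFieldType) (k M : nat) : (0 < k)%N -> (k <= M)%N ->
  M%:R^-1 <= k%:R / M%:R :> R /\ k%:R / M%:R <= 1 :> R.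
Proof.
move=> k_gt0 le_kM; have M_gt0 : (0 < M)%N := leq_trans k_gt0 le_kM.
split; first by rewrite -[leLHS]mul1r ler_pM2r ?invr_gt0 ?ltr0n // ler1n.
by rewrite ler_pdivrMr ?ltr0n // mul1r ler_nat.
Qed.

Lemma ratio_sub_ge (R : realFieldType) (a b M : nat) : (a < b)%N ->
  M%:R^-1 <= b%:R / M%:R - a%:R / M%:R :> R.
Proof.
move=> lt_ab; rewrite -mulrBl -[leLHS]mul1r; apply: ler_wpM2r; first by rewrite invr_ge0.
by rewrite -natrB ?(ltnW lt_ab) // ler1n subn_gt0.
Qed.

Section NoGap.
Context {R : realType} {X Y : finType} {M : nat} {r : X -> nat} {s : Y -> nat}.
Context {mu : X -> R} {nu : Y -> R}.
Hypotheses (M_gt0 : (0 < M)%N) (r_gt0 : forall x, (0 < r x)%N) (s_gt0 : forall y, (0 < s y)%N).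
Hypotheses (r_sum : (\sum_x r x)%N = M) (s_sum : (\sum_y s y)%N = M).
Hypotheses (mu_r : forall x, mu x = (r x)%:R / M%:R) (nu_s : forall y, nu y = (s y)%:R / M%:R).

Lemma mu_gt0 x : 0 < mu x.
Proof. by rewrite mu_r divr_gt0 ?ltr0n. Qed.

Lemma nu_gt0 y : 0 < nu y.
Proof. by rewrite nu_s divr_gt0 ?ltr0n. Qed.

Lemma lnM_ge0 : 0 <= ln M%:R :> R.
Proof. by rewrite ln_ge0 // ler1n. Qed.

Lemma ln_ge_lnMinv {a : R} : M%:R^-1 <= a -> - ln M%:R <= ln a.
Proof.
move=> Minv_le; have a_gt0 : 0 < a by apply: lt_le_trans Minv_le; rewrite invr_gt0 ltr0n.
by rewrite -lnV ?posrE ?ltr0n // ler_ln ?posrE ?invr_gt0 ?ltr0n.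
Qed.

Lemma ln_mu_nu_bounds x y : - (2 * ln M%:R) <= ln (mu x * nu y) <= 0.
Proof.
have [mu_lb mu_ub] : M%:R^-1 <= mu x /\ mu x <= 1.
  by rewrite mu_r; apply: ratio_bounds; rewrite // -r_sum (bigD1 x) //= leq_addr.
have [nu_lb nu_ub] : M%:R^-1 <= nu y /\ nu y <= 1.
  by rewrite nu_s; apply: ratio_bounds; rewrite // -s_sum (bigD1 y) //= leq_addr.
rewrite lnM ?posrE ?mu_gt0 ?nu_gt0 //.
have := ln_ge_lnMinv mu_lb; have := ln_ge_lnMinv nu_lb.
have := ln_le0 mu_ub; have := ln_le0 nu_ub.
by move=> *; apply/andP; split; lra.
Qed.

Lemma ln_card_ge0 : 0 <= ln (#|X| * #|Y|)%:R :> R.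
Proof.
apply: ln_ge0; rewrite ler1n muln_gt0.
by rewrite (@card_gt0_of_sum_gt0 _ r) ?(@card_gt0_of_sum_gt0 _ s) ?r_sum ?s_sum.
Qed.

Context {eps1 eps2 : R} {P1 P2 : X -> Y -> R} {u : X -> R} {v : Y -> R}.
Hypotheses (eps2_gt0 : 0 < eps2) (eps21 : eps2 < eps1).
Hypotheses (P1_gt0 : forall x y, 0 < P1 x y) (P2_gt0 : forall x y, 0 < P2 x y).
Hypotheses (P1_row : forall x, \sum_y P1 x y = mu x) (P1_col : forall y, \sum_x P1 x y = nu y).
Hypotheses (P2_row : forall x, \sum_y P2 x y = mu x) (P2_col : forall y, \sum_x P2 x y = nu y).
Hypothesis uv_density : forall x y,
  u x - v y = eps2 * ln (P2 x y / (mu x * nu y)) - eps1 * ln (P1 x y / (mu x * nu y)).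

Lemma potential_diff_le x y : u x - v y <= eps2 * ln (P2 x y) - eps1 * ln (P1 x y).
Proof.
have /andP[_ w_le0] := ln_mu_nu_bounds x y.
have munu_pos : mu x * nu y \in Num.pos by rewrite posrE mulr_gt0 ?mu_gt0 ?nu_gt0.
rewrite uv_density !ln_div ?posrE //.
have : (eps1 - eps2) * ln (mu x * nu y) <= 0 by rewrite pmulr_rle0 ?subr_gt0.
lra.
Qed.

Lemma potential_diff_ge x y :
  eps2 * ln (P2 x y) - eps1 * ln (P1 x y) - 2 * eps1 * ln M%:R <= u x - v y.
Proof.
have /andP[w_ge _] := ln_mu_nu_bounds x y.
have munu_pos : mu x * nu y \in Num.pos by rewrite posrE mulr_gt0 ?mu_gt0 ?nu_gt0.
rewrite uv_density !ln_div ?posrE //.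
have : (eps1 - eps2) * - (2 * ln M%:R) <= (eps1 - eps2) * ln (mu x * nu y).
  by rewrite ler_pM2l ?subr_gt0.
have := mulr_ge0 (ltW eps2_gt0) lnM_ge0.
lra.
Qed.

Lemma block_le1 {P : X -> Y -> R} : (forall x y, 0 < P x y) ->
  (forall x, \sum_y P x y = mu x) -> forall A B, block P A B <= 1.
Proof.
move=> P_gt0 P_row A B.
apply: le_trans (block_le_total P (fun x y => ltW (P_gt0 x y)) A B) _.
under eq_bigr do rewrite P_row mu_r.
by rewrite -mulr_suml -natr_sum r_sum divff // pnatr_eq0 -lt0n.
Qed.

Lemma block_mass_diff (A : {set X}) (B : {set Y}) :
  \sum_(x in A) mu x - \sum_(y in B) nu y
    = (\sum_(x in A) r x)%:R / M%:R - (\sum_(y in B) s y)%:R / M%:R.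
Proof.
by rewrite !natr_sum !mulr_suml; congr (_ - _); apply: eq_bigr => *; rewrite ?mu_r ?nu_s.
Qed.

Lemma up_block_bound {G : R} {A : {set X}} {B : {set Y}} :
  {in A & B, forall x y, G <= u x - v y} -> 0 < block P1 A B ->
  G <= eps2 * ln (block P2 A B) - eps1 * ln (block P1 A B) + eps1 * ln (#|X| * #|Y|)%:R.
Proof.
move=> gap a_gt0.
have [x [y [xA yB P1_ge]]] := block_entry_ge_mean P1 A B a_gt0.
have n_gt0 : 0 < (#|X| * #|Y|)%:R :> R.
  by rewrite ltr0n muln_gt0; apply/andP; split; apply/card_gt0P; [exists x | exists y].
have P2_le : P2 x y <= block P2 A B.
  exact: block_ge_entry P2 (fun x y => ltW (P2_gt0 x y)) A B x y xA yB.
have lnP2_le : ln (P2 x y) <= ln (block P2 A B).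
  by rewrite ler_ln ?posrE ?P2_gt0 ?(lt_le_trans (P2_gt0 x y) P2_le).
have P1_ge' : ln (block P1 A B) - ln (#|X| * #|Y|)%:R <= ln (P1 x y).
  by rewrite -ln_div ?posrE // ler_ln ?posrE ?divr_gt0.
have := gap x y xA yB; have := potential_diff_le x y.
have := ler_wpM2l (ltW eps2_gt0) lnP2_le.
have := ler_wpM2l (ltW (lt_trans eps2_gt0 eps21)) P1_ge'.
lra.
Qed.

Lemma down_block_bound {G : R} {A : {set X}} {B : {set Y}} :
  {in A & B, forall x y, u x - v y <= - G} -> 0 < block P2 A B ->
  G <= eps1 * ln (block P1 A B) - eps2 * ln (block P2 A B)
       + eps2 * ln (#|X| * #|Y|)%:R + 2 * eps1 * ln M%:R.
Proof.
move=> gap b_gt0.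
have [x [y [xA yB P2_ge]]] := block_entry_ge_mean P2 A B b_gt0.
have n_gt0 : 0 < (#|X| * #|Y|)%:R :> R.
  by rewrite ltr0n muln_gt0; apply/andP; split; apply/card_gt0P; [exists x | exists y].
have P1_le : P1 x y <= block P1 A B.
  exact: block_ge_entry P1 (fun x y => ltW (P1_gt0 x y)) A B x y xA yB.
have lnP1_le : ln (P1 x y) <= ln (block P1 A B).
  by rewrite ler_ln ?posrE ?P1_gt0 ?(lt_le_trans (P1_gt0 x y) P1_le).
have lnP2_ge : ln (block P2 A B) - ln (#|X| * #|Y|)%:R <= ln (P2 x y).
  by rewrite -ln_div ?posrE // ler_ln ?posrE ?divr_gt0.
have := gap x y xA yB; have := potential_diff_ge x y.
have := ler_wpM2l (ltW (lt_trans eps2_gt0 eps21)) lnP1_le.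
have := ler_wpM2l (ltW eps2_gt0) lnP2_ge.
lra.
Qed.

Lemma gap_width_gt0 {G : R} : eps1 * (ln (#|X| * #|Y|)%:R + 3 * ln M%:R) < G -> 0 < G.
Proof.
move=> G_gt; apply: le_lt_trans G_gt; apply: mulr_ge0; first exact: ltW (lt_trans eps2_gt0 eps21).
by apply: addr_ge0 ln_card_ge0 _; apply: mulr_ge0 _ lnM_ge0.
Qed.

Lemma no_separating_cut {G : R} {A : {set X}} {B : {set Y}} :
  eps1 * (ln (#|X| * #|Y|)%:R + 3 * ln M%:R) < G ->
  {in A & ~: B, forall x y, G <= u x - v y} -> {in ~: A & B, forall x y, u x - v y <= - G} ->
  (exists x y, (x \in A) != (y \in B)) -> False.
Proof.
move=> G_gt up down [x [y mixed]].
have eps1_gt0 : 0 < eps1 := lt_trans eps2_gt0 eps21.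
have := ler_wpM2r ln_card_ge0 (ltW eps21); have := ler_wpM2r lnM_ge0 (ltW eps21).
have := mulr_ge0 (ltW eps1_gt0) lnM_ge0 => eps1_lnM_ge0 eps_lnM eps_lnXY.
have a_diff := block_marginal_diff P1 A B P1_row P1_col.
have b_diff := block_marginal_diff P2 A B P2_row P2_col.
rewrite block_mass_diff in a_diff b_diff.
have a2_le1 := block_le1 P1_gt0 P1_row (~: A) B.
have b1_le1 := block_le1 P2_gt0 P2_row A (~: B).
set a1 := block P1 A (~: B) in a_diff *; set a2 := block P1 (~: A) B in a_diff a2_le1 *.
set b1 := block P2 A (~: B) in b_diff b1_le1 *; set b2 := block P2 (~: A) B in b_diff *.
have a2_ge0 : 0 <= a2 by apply: sumr_ge0 => x' _; apply: sumr_ge0 => y' _; apply: ltW.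
have b1_ge0 : 0 <= b1 by apply: sumr_ge0 => x' _; apply: sumr_ge0 => y' _; apply: ltW.
have Minv_gt0 : 0 < M%:R^-1 :> R by rewrite invr_gt0 ltr0n.
case: (ltngtP (\sum_(x in A) r x) (\sum_(y in B) s y)) => [lt_AB|lt_BA|eq_AB].
- have b2_ge : M%:R^-1 <= b2 by have := ratio_sub_ge R _ _ M lt_AB; lra.
  have := down_block_bound down (lt_le_trans Minv_gt0 b2_ge).
  have := ler_wpM2l (ltW eps1_gt0) (ln_le0 a2_le1).
  have := ler_wpM2l (ltW eps2_gt0) (ln_ge_lnMinv b2_ge).
  lra.
- have a1_ge : M%:R^-1 <= a1 by have := ratio_sub_ge R _ _ M lt_BA; lra.
  have := up_block_bound up (lt_le_trans Minv_gt0 a1_ge).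
  have := ler_wpM2l (ltW eps2_gt0) (ln_le0 b1_le1).
  have := ler_wpM2l (ltW eps1_gt0) (ln_ge_lnMinv a1_ge).
  lra.
- rewrite eq_AB subrr in a_diff b_diff.
  have a12 : a1 = a2 by lra.
  have b12 : b1 = b2 by lra.
  have [a1_gt0 b2_gt0] : 0 < a1 /\ 0 < b2.
    case: (boolP (x \in A)) (boolP (y \in B)) mixed => [xA|xA'] [yB|yB'] // _.
      by rewrite -b12; split; apply: (block_gt0 x y) => //; rewrite inE.
    by rewrite a12; split; apply: (block_gt0 x y) => //; rewrite inE.
  have := up_block_bound up a1_gt0; have := down_block_bound down b2_gt0.
  rewrite -/a1 -/a2 -/b1 -/b2 -a12 -b12; lra.
Qed.

Lemma potentials_gapless {G : R} : eps1 * (ln (#|X| * #|Y|)%:R + 3 * ln M%:R) < G ->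
  forall t, (exists z, sumf u v z <= t) -> (exists z, t + G <= sumf u v z) ->
  exists z, t < sumf u v z < t + G.
Proof.
move=> G_gt t [z0 z0_le] [z1 z1_ge].
have [/existsP[z hz]|/existsPn gap] := boolP [exists z, t < sumf u v z < t + G].
  by exists z.
have G_gt0 := gap_width_gt0 G_gt.
have below z : ~~ (t + G <= sumf u v z) -> sumf u v z <= t.
  by move: (gap z); rewrite negb_and -!leNgt => /orP[] // ->.
set A := [set x | t + G <= u x]; set B := [set y | t + G <= v y].
have [x0 _] : exists x0 : X, true.
  by apply/card_gt0P/(@card_gt0_of_sum_gt0 _ r); rewrite r_sum.
have [y0 _] : exists y0 : Y, true.
  by apply/card_gt0P/(@card_gt0_of_sum_gt0 _ s); rewrite s_sum.
have memAB z : sumf (mem A) (mem B) z = (t + G <= sumf u v z) by case: z => ? /=; rewrite inE.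
exfalso; apply: (no_separating_cut G_gt (A := A) (B := B)).
- by move=> x y; rewrite !inE => ux /(below (inr y)) /= vy; lra.
- by move=> x y; rewrite !inE => /(below (inl x)) /= ux vy; lra.
- apply: (sumf_neq_split _ _ x0 y0 z0 z1).
  by rewrite !memAB z1_ge; apply/eqP => z0_ge; lra.
Qed.

Lemma potentials_spread_le {G : R} : eps1 * (ln (#|X| * #|Y|)%:R + 3 * ln M%:R) < G ->
  forall z0 z1, sumf u v z1 - sumf u v z0 <= (#|X| + #|Y|)%:R * G.
Proof.
move=> G_gt; rewrite -card_sum.
exact: gapless_spread_le (ltW (gap_width_gt0 G_gt)) (potentials_gapless G_gt).
Qed.

End NoGap.

Lemma all_equal_of_sum_le1 {I : finType} {k : I -> nat} :
  (forall i, 0 < k i)%N -> (\sum_i k i <= 1)%N -> forall i j : I, i = j.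
Proof.
move=> k_gt0 sum_le1; have /fintype_le1P eq_all : (#|I| <= 1)%N.
  by apply: leq_trans sum_le1; rewrite -sum1_card leq_sum.
by move=> i j; rewrite (eq_all i j).
Qed.

Lemma spread_bound_ge0 {R : realType} {eps : R} {N M : nat} :
  0 <= eps -> (0 < N)%N -> (0 < M)%N -> 0 <= eps * N%:R * (4 * ln N%:R + 24 * ln M%:R).
Proof.
move=> eps_ge0 N_gt0 M_gt0; apply: mulr_ge0; first exact: mulr_ge0.
by apply: addr_ge0; apply: mulr_ge0 => //; rewrite ln_ge0 // ler1n.
Qed.

Lemma gap_width_lt {R : realType} {eps : R} {nX nY N M : nat} : 0 < eps ->
  (0 < nX)%N -> (0 < nY)%N -> (nX <= N)%N -> (nY <= N)%N -> (1 < M)%N ->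
  eps * (ln (nX * nY)%:R + 3 * ln M%:R) < eps * (2 * ln N%:R + 12 * ln M%:R).
Proof.
move=> eps_gt0 nX_gt0 nY_gt0 le_nXN le_nYN M_gt1.
have N_gt0 : (0 < N)%N := leq_trans nX_gt0 le_nXN.
have lnM_gt0 : 0 < ln M%:R :> R by rewrite ln_gt0 // ltr1n.
have : ln (nX * nY)%:R <= ln N%:R + ln N%:R :> R.
  rewrite -lnM ?posrE ?ltr0n // -natrM ler_ln ?posrE ?ltr0n ?muln_gt0 ?nX_gt0 ?nY_gt0 ?N_gt0 //.
  by rewrite ler_nat leq_mul.
by rewrite ltr_pM2l //; lra.
Qed.

Lemma gap_width_spread_le {R : realType} {eps : R} {nX nY N M : nat} : 0 <= eps ->
  (nX <= N)%N -> (nY <= N)%N -> (0 < N)%N -> (0 < M)%N ->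
  (nX + nY)%:R * (eps * (2 * ln N%:R + 12 * ln M%:R))
    <= eps * N%:R * (4 * ln N%:R + 24 * ln M%:R).
Proof.
move=> eps_ge0 le_nXN le_nYN N_gt0 M_gt0.
have -> : eps * N%:R * (4 * ln N%:R + 24 * ln M%:R)
    = (N + N)%:R * (eps * (2 * ln N%:R + 12 * ln M%:R)) by rewrite natrD; ring.
apply: ler_wpM2r; last by rewrite ler_nat leq_add.
by apply: mulr_ge0 eps_ge0 _; apply: addr_ge0; apply: mulr_ge0 => //; rewrite ln_ge0 // ler1n.
Qed.

Theorem mainTheorem6 (R : realType) (X Y : finType) (N M : nat)
  (hNX : (#|X| <= N)%N) (hNY : (#|Y| <= N)%N)
  (c : X -> Y -> R) (hc : forall x y, 0 <= c x y)
  (r : X -> nat) (s : Y -> nat) (hM : (0 < M)%N)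
  (hr : forall x, (0 < r x)%N) (hs : forall y, (0 < s y)%N)
  (hrsum : (\sum_(x : X) r x)%N = M) (hssum : (\sum_(y : Y) s y)%N = M)
  (eps1 eps2 : R) (heps2 : 0 < eps2) (heps12 : eps2 < eps1)
  (alpha1 alpha2 : X -> R) (beta1 beta2 : Y -> R)
  (hmax1 : is_maximizer c (fun x => (r x)%:R / M%:R) (fun y => (s y)%:R / M%:R)
             eps1 alpha1 beta1)
  (hmax2 : is_maximizer c (fun x => (r x)%:R / M%:R) (fun y => (s y)%:R / M%:R)
             eps2 alpha2 beta2) :
  (forall x x' : X,
     (alpha2 x - alpha1 x) - (alpha2 x' - alpha1 x')
       <= eps1 * N%:R * (4 * ln (N%:R : R) + 24 * ln (M%:R : R))) /\
  (forall y y' : Y,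
     (beta2 y - beta1 y) - (beta2 y' - beta1 y')
       <= eps1 * N%:R * (4 * ln (N%:R : R) + 24 * ln (M%:R : R))).
Proof.
set mu := fun x => _ in hmax1 hmax2; set nu := fun y => _ in hmax1 hmax2.
have eps1_gt0 : 0 < eps1 := lt_trans heps2 heps12.
have X_gt0 : (0 < #|X|)%N by apply: (@card_gt0_of_sum_gt0 _ r); rewrite hrsum.
have Y_gt0 : (0 < #|Y|)%N by apply: (@card_gt0_of_sum_gt0 _ s); rewrite hssum.
have N_gt0 : (0 < N)%N := leq_trans X_gt0 hNX.
(* For M = 1 both sets are singletons; the gap argument below needs ln M > 0. *)
have [M_le1|M_gt1] := leqP M 1.
  have bound_ge0 := spread_bound_ge0 (ltW eps1_gt0) N_gt0 hM.
  have X_eq := all_equal_of_sum_le1 hr (leq_trans (eq_leq hrsum) M_le1).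
  have Y_eq := all_equal_of_sum_le1 hs (leq_trans (eq_leq hssum) M_le1).
  by split=> [x x'|y y']; rewrite ?(X_eq x x') ?(Y_eq y y') subrr.
have mu_gt0 x : 0 < mu x by rewrite divr_gt0 ?ltr0n.
have nu_gt0 y : 0 < nu y by rewrite divr_gt0 ?ltr0n.
set P1 := plan c mu nu eps1 alpha1 beta1; set P2 := plan c mu nu eps2 alpha2 beta2.
have uv_density x y : (alpha2 x - alpha1 x) - (beta1 y - beta2 y)
    = eps2 * ln (P2 x y / (mu x * nu y)) - eps1 * ln (P1 x y / (mu x * nu y)).
  by rewrite !ln_plan_density ?gt_eqF //; ring.
have spread := potentials_spread_le hM hr hs hrsum hssum (fun=> erefl) (fun=> erefl)
  heps2 heps12 (plan_gt0 mu_gt0 nu_gt0 alpha1 beta1) (plan_gt0 mu_gt0 nu_gt0 alpha2 beta2)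
  (maximizer_row_marginal eps1_gt0 mu_gt0 nu_gt0 hmax1)
  (maximizer_col_marginal eps1_gt0 mu_gt0 nu_gt0 hmax1)
  (maximizer_row_marginal heps2 mu_gt0 nu_gt0 hmax2)
  (maximizer_col_marginal heps2 mu_gt0 nu_gt0 hmax2) uv_density
  (gap_width_lt eps1_gt0 X_gt0 Y_gt0 hNX hNY M_gt1).
have bound := gap_width_spread_le (ltW eps1_gt0) hNX hNY N_gt0 hM.
split=> [x x'|y y']; first exact: le_trans (spread (inl x') (inl x)) bound.
by have := le_trans (spread (inr y) (inr y')) bound; rewrite /=; lra.
Qed.
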